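(* Let $\varphi\colon\mathcal{M}\to\mathcal{X}$ be a smooth lift and let $y\in\mathcal{M}$. Then $\varphi$ satisfies the ''local $\Rightarrow$ local'' property at $y$ if and only if $\varphi$ is open at $y$. Moreover, if $\varphi$ does not satisfy ''local $\Rightarrow$ local'' at $y$, then there is a smooth cost $f$ such that $y$ is a local minimum of $g=f\circ\varphi$ on $\mathcal{M}$ but $\varphi(y)$ is not a local minimum of $f$ on $\mathcal{X}$.
   Context: Let $\mathcal{E}$ be a finite-dimensional real inner product space and $\mathcal{M}$ a smooth manifold. A smooth lift of a set $\mathcal{X}\subseteq\mathcal{E}$ is a smooth map $\varphi\colon\mathcal{M}\to\mathcal{E}$ with $\varphi(\mathcal{M})=\mathcal{X}$. $\mathcal{X}$ carries the subspace topology from $\mathcal{E}$. For a cost $f$ on $\mathcal{X}$ put $g=f\circ\varphi$; local minima of $f$ on $\mathcal{X}$ (resp. of $g$ on $\mathcal{M}$) are points minimizing the function over some neighborhood in $\mathcal{X}$ (resp. $\mathcal{M}$). The lift satisfies ''local $\Rightarrow$ local'' at $y$ if for every continuous $f\colon\mathcal{X}\to\mathbb{R}$, whenever $y$ is a local minimum of $g$ on $\mathcal{M}$, $\varphi(y)$ is a local minimum of $f$ on $\mathcal{X}$. The map $\varphi$ is open at $y$ if it maps every neighborhood of $y$ in $\mathcal{M}$ to a neighborhood of $\varphi(y)$ in $\mathcal{X}$ (a neighborhood of a point is a set containing it in its interior). *)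

From HB Require Import structures.
From mathcomp Require Import all_boot all_order all_algebra.
From mathcomp Require Import all_classical all_reals all_analysis.
Set Implicit Arguments. Unset Strict Implicit. Unset Printing Implicit Defensive.
Import Order.TTheory GRing.Theory Num.Theory.
Import numFieldNormedType.Exports.
Local Open Scope classical_set_scope.
Local Open Scope ring_scope.

Definition iterD (R : realType) (V W : normedModType R)
  (vs : seq V) (f : V -> W) : V -> W :=
  foldr (fun v g => 'D_v g) f vs.

Definition smooth_on (R : realType) (V W : normedModType R)
  (A : set V) (f : V -> W) : Prop :=
  open A /\
  forall vs : seq V,
    (forall x, A x -> {for x, continuous (iterD vs f)}) /\
    (forall v x, A x -> derivable (iterD vs f) x v).

Record chart (R : realType) (d : nat) (M : topologicalType) := Chart {
  ch_dom : set M;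
  ch_map : M -> 'rV[R]_d;
  ch_inv : 'rV[R]_d -> M }.

Definition is_chart (R : realType) (d : nat) (M : topologicalType)
  (c : chart R d M) : Prop :=
  [/\ open (ch_dom c),
      open (ch_map c @` ch_dom c),
      (forall x, ch_dom c x -> ch_inv c (ch_map c x) = x),
      {within ch_dom c, continuous (ch_map c)} &
      {within ch_map c @` ch_dom c, continuous (ch_inv c)}].

Definition smooth_atlas (R : realType) (d : nat) (M : topologicalType)
  (At : set (chart R d M)) : Prop :=
  [/\ (forall c, At c -> is_chart c),
      (forall x : M, exists2 c, At c & ch_dom c x) &
      (forall c1 c2, At c1 -> At c2 ->
         smooth_on (ch_map c1 @` (ch_dom c1 `&` ch_dom c2))
                   (ch_map c2 \o ch_inv c1))].

Definition smooth_manifold (R : realType) (d : nat) (M : topologicalType)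
  (At : set (chart R d M)) : Prop :=
  [/\ hausdorff_space M, @second_countable M & smooth_atlas At].

Definition smooth_map (R : realType) (d : nat) (M : topologicalType)
  (At : set (chart R d M)) (E : normedModType R) (phi : M -> E) : Prop :=
  forall c, At c -> smooth_on (ch_map c @` ch_dom c) (phi \o ch_inv c).

Definition nbhs_in (T : topologicalType) (X : set T) (p : T) (S : set T) :=
  X p /\ exists2 V, nbhs p V & V `&` X `<=` S.

Definition local_min_in (R : realType) (T : topologicalType) (X : set T)
  (f : T -> R) (p : T) : Prop :=
  X p /\ exists2 S, nbhs_in X p S & forall x, S x -> X x -> f p <= f x.

Definition local_min (R : realType) (M : topologicalType) (g : M -> R) (y : M) :=
  exists2 U, nbhs y U & forall u, U u -> g y <= g u.

Definition open_at (M E : topologicalType) (phi : M -> E) (y : M) : Prop :=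
  forall N, nbhs y N -> nbhs_in (range phi) (phi y) (phi @` N).

Definition local_local (R : realType) (M E : topologicalType)
  (phi : M -> E) (y : M) : Prop :=
  forall f : E -> R, {within range phi, continuous f} ->
    local_min (f \o phi) y -> local_min_in (range phi) f (phi y).

(* If [phi] is open at [y], a minimum of [f \o phi] on a neighbourhood [U]
   of [y] is a minimum of [f] on the neighbourhood [phi @` U] of [phi y].
   Conversely, if [phi] is not open at [y], take a neighbourhood [N] of [y]
   such that [phi @` N] is not a neighbourhood of [phi y] in [X]. Through a
   chart, [N] contains a compact neighbourhood of [y] whose image [C] is
   closed, so points [x_k] of [X \ C] converge to [phi y]. The cost is a sum
   of negative bumps centred at the [x_k], with radii [r_k] keeping them
   away from [C] and from one another and heights [exp (-1 / r_k)]: every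
   derivative of the sum is then O(|z - phi y|^2), so the sum is smooth
   even at [phi y]. It vanishes on [C], so [y] is a local minimum of
   [f \o phi], but it is negative at the [x_k]. *)

From mathcomp Require Import all_boot all_order all_algebra.
From mathcomp Require Import all_classical all_reals all_analysis.
From mathcomp Require Import ring lra zify.
Import Order.TTheory GRing.Theory Num.Theory.
Import numFieldNormedType.Exports.
Local Open Scope classical_set_scope.
Local Open Scope ring_scope.
Set Implicit Arguments. Unset Strict Implicit. Unset Printing Implicit Defensive.

Section QuadraticallyFlat.
Variables (R : realType) (V W : normedModType R).

Definition quadratically_flat (G : V -> W) (p : V) : Prop :=
  exists2 K : R, 0 <= K & forall z, `|G z| <= K * `|z - p| ^+ 2.

Lemma quadratically_flat_eq0 G p : quadratically_flat G p -> G p = 0.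
Proof.
by case=> K _ /(_ p); rewrite subrr normr0 expr0n mulr0 normr_le0 => /eqP.
Qed.

Lemma quadratically_flat_is_derive G p v :
  quadratically_flat G p -> is_derive p v G 0.
Proof.
move=> Gflat; have Gp0 := quadratically_flat_eq0 Gflat; case: Gflat => K K0 HK.
have quot0 : (fun h : R => h^-1 *: ((G \o shift p) (h *: v) - G p)) @ 0^' --> 0.
  apply/cvgr0Pnorm_lt => e e0.
  have Kv0 : 0 < K * `|v| ^+ 2 + 1 by rewrite ltr_wpDl ?mulr_ge0.
  near=> h; have [->|h0] := eqVneq h 0; first by rewrite invr0 scale0r normr0.
  rewrite Gp0 subr0 normrZ normfV ltr_pdivrMl ?normr_gt0 //=.
  apply: (le_lt_trans (HK _)); rewrite addrK normrZ exprMn expr2 -!mulrA.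
  rewrite mulrCA ltr_pM2l ?normr_gt0 //.
  apply: (le_lt_trans (y := (K * `|v| ^+ 2 + 1) * `|h|)).
    by rewrite mulrCA mulrC ler_wpM2r // lerDl.
  rewrite mulrC -ltr_pdivlMr //; near: h; exact: dnbhs0_lt (divr_gt0 e0 Kv0).
have Gv : derivable G p v by apply/cvg_ex; exists 0.
by split => //; exact: cvg_lim.
Unshelve. all: by end_near. Qed.

Lemma quadratically_flat_continuous G p :
  quadratically_flat G p -> {for p, continuous G}.
Proof.
move=> Gflat; have Gp0 := quadratically_flat_eq0 Gflat; case: Gflat => K K0 HK.
apply/cvgrPdist_lt => e e0; rewrite Gp0.
have d0 : 0 < Num.min 1 (e / (K + 1)) by rewrite lt_min ltr01 divr_gt0 // ltr_wpDl.
near=> z; rewrite sub0r normrN; apply: (le_lt_trans (HK z)).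
have : `|z - p| < Num.min 1 (e / (K + 1)).
  near: z; apply: (filterS _ (nbhsx_ballx p _ d0)) => z.
  by rewrite -ball_normE /= distrC.
rewrite lt_min => /andP[z1 ze].
have zp0 := normr_ge0 (z - p).
apply: (le_lt_trans (y := (K + 1) * `|z - p|)).
  rewrite expr2 mulrA ler_wpM2r //; nra.
by rewrite mulrC -ltr_pdivlMr // ltr_wpDl.
Unshelve. all: by end_near. Qed.

End QuadraticallyFlat.

Section ExpInv.
Variable R : realType.

Definition expinv (P : {poly R}) (t : R) : R :=
  if 0 < t then P.[t^-1] * expR (- t^-1) else 0.

(* d/dt (P(1/t) e^(-1/t)) = t^-2 (P - P')(1/t) e^(-1/t). *)
Definition expinv_deriv_poly (P : {poly R}) : {poly R} := 'X^2 * (P - P^`()).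

Lemma expinv_le0 P t : t <= 0 -> expinv P t = 0.
Proof. by rewrite /expinv leNgt => /negbTE ->. Qed.

Lemma horner_nneg_bound (P : {poly R}) : exists2 K, 0 <= K &
  forall s, 0 <= s -> `|P.[s]| <= K * (1 + s ^+ size P).
Proof.
exists (\sum_(i < size P) `|P`_i|); first by apply: sumr_ge0 => i _.
move=> s s0; rewrite horner_coef mulr_suml.
apply: (le_trans (ler_norm_sum _ _ _)); apply: ler_sum => i _.
rewrite normrM ler_wpM2l // normrX ger0_norm //.
have [s1|s1] := leP s 1.
  by apply: (le_trans (exprn_ile1 _ s0 s1)); rewrite lerDl exprn_ge0.
apply: (le_trans (ler_weXn2l (ltW s1) (ltnW (ltn_ord i)))); lra.
Qed.

Lemma poly_expN_bound (N : nat) : exists2 C : R, 0 < C & forall s : R, 0 < s ->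
  (1 + s ^+ N) * expR (- s) <= C / s /\ (1 + s ^+ N) * expR (- s) <= C.
Proof.
pose F : R := (N.+1)`!%:R.
have F1 : 1 <= F by rewrite /F ler1n fact_gt0.
have F0 : 0 < F by exact: lt_le_trans ltr01 F1.
exists (2 * F) => [|s s0]; first by rewrite mulr_gt0.
have e0 : 0 < expR (- s) := expR_gt0 _.
have [s1|s1] := leP s 1.
  have a1 : 1 + s ^+ N <= 2 by have := exprn_ile1 N (ltW s0) s1; lra.
  have a2 : expR (- s) <= 1 by rewrite expR_le1 oppr_le0 ltW.
  have := ler_pM (addr_ge0 ler01 (exprn_ge0 N (ltW s0))) (ltW e0) a1 a2.
  rewrite mulr1 => le2; split; apply: (le_trans le2); last by lra.
  by rewrite ler_pdivlMr //; lra.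
have sN : 1 + s ^+ N <= 2 * s ^+ N.
  by rewrite mulrDl mul1r lerD2r exprn_ege1 // ltW.
(* The exponential dominates its Taylor term s^(N+1)/(N+1)!. *)
have sNe : s ^+ N * expR (- s) <= F / s.
  have taylor : s ^+ N.+1 / F <= expR s.
    by apply: (le_trans _ (expR_ge1Dxn N (ltW s0))); rewrite lerDr.
  rewrite expRN ler_pdivrMr ?expR_gt0 // mulrAC ler_pdivlMr // -exprSr.
  by move: taylor; rewrite ler_pdivrMr // mulrC.
have bound : (1 + s ^+ N) * expR (- s) <= 2 * F / s.
  apply: (le_trans (ler_wpM2r (ltW e0) sN)).
  by rewrite -!mulrA ler_wpM2l // mulrA.
split => //; apply: (le_trans bound); rewrite ler_pdivrMr //; nra.
Qed.

Lemma expinv_bound (P : {poly R}) : exists2 K, 0 <= K &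
  forall t, `|expinv P t| <= K /\ `|expinv P t| <= K * `|t|.
Proof.
have [K K0 HK] := horner_nneg_bound P.
have [C C0 HC] := poly_expN_bound (size P).
exists (K * C) => [|t]; first by rewrite mulr_ge0 // ltW.
have [t0|t0] := leP t 0.
  by rewrite expinv_le0 // normr0 mulr_ge0 ?mulr_ge0 // ltW.
have s0 : 0 < t^-1 by rewrite invr_gt0.
rewrite /expinv t0 normrM [`|expR _|]ger0_norm ?expR_ge0 //.
have le1 := ler_wpM2r (expR_ge0 (- t^-1)) (HK _ (ltW s0)).
have [le2 le3] := HC _ s0.
split; apply: (le_trans le1); rewrite -!mulrA ler_wpM2l //.
by rewrite gtr0_norm //; move: le2; rewrite invrK.
Qed.

Lemma expinv_quadratically_flat (P : {poly R}) : quadratically_flat (expinv P) 0.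
Proof.
have [K K0 HK] := expinv_bound ('X * P).
exists K => // t; rewrite subr0.
have [t0|t0] := leP t 0.
  by rewrite expinv_le0 // normr0 mulr_ge0 // exprn_ge0.
have -> : expinv P t = t * expinv ('X * P) t.
  by rewrite /expinv t0 hornerM hornerX !mulrA mulfV ?mul1r // gt_eqF.
rewrite normrM expr2 mulrA [K * _]mulrC -mulrA ler_wpM2l //.
by case: (HK t).
Qed.

Lemma is_derive_expinv (P : {poly R}) (t : R) :
  is_derive t 1 (expinv P) (expinv (expinv_deriv_poly P) t).
Proof.
have [t0|t0|->] := ltgtP t 0.
- rewrite expinv_le0 ?ltW //.
  apply: (@near_eq_is_derive _ _ _ (cst 0)).
  near=> z; rewrite expinv_le0 // ltW //; near: z; exact: lt_nbhsl.
- pose g z := P.[z^-1] * expR (- z^-1).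
  apply: (@near_eq_is_derive _ _ _ g).
    near=> z; rewrite /expinv ifT //; near: z.
    by apply: (filterS _ (Nlt_nbhsl (_ : - t < 0))) => [z|]; rewrite oppr_lt0.
  have tN0 : t != 0 by rewrite gt_eqF.
  have dinv : is_derive t 1 (fun z : R => z^-1) (- t ^- 2 *: 1).
    exact: is_deriveV tN0 (is_derive_id _ _).
  have dP : is_derive t 1 (horner P \o (fun z : R => z^-1))
      (P^`().[t^-1] * (- t ^- 2 *: 1)) by exact: is_derive1_comp.
  have dexp : is_derive t 1 (expR \o (fun z : R => - z^-1))
      (expR (- t^-1) * (- (- t ^- 2 *: 1))).
    by apply: is_derive1_comp; exact: is_deriveN.
  rewrite /expinv t0 /expinv_deriv_poly.
  apply: (is_derive_eq (is_deriveM dP dexp)).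
  rewrite /= hornerM hornerXn hornerD hornerN /GRing.scale /= !mulr1 exprVn.
  ring.
- rewrite expinv_le0 //.
  exact: quadratically_flat_is_derive (expinv_quadratically_flat P).
Unshelve. all: by end_near. Qed.

Lemma continuous_expinv (P : {poly R}) : continuous (expinv P).
Proof.
move=> t; apply: differentiable_continuous; apply/derivable1_diffP.
by case: (is_derive_expinv P t).
Qed.

End ExpInv.

Section DirectionalDerivative.
Variables (R : realType) (V W : normedModType R).

Lemma is_derive_line (f : V -> W) x v df :
  is_derive (0 : R) (1 : R) (fun h : R => f (h *: v + x)) df <-> is_derive x v f df.
Proof.
pose fx h := f (h *: v + x).
have quotE : (fun h : R => h^-1 *: ((fx \o shift 0) (h *: 1) - fx 0))
   = (fun h : R => h^-1 *: ((f \o shift x) (h *: v) - f x)).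
  by apply/funext => h; rewrite /fx /= addr0 scale0r add0r [h *: 1]mulr1.
split=> -[fv <-].
  have fv' : derivable f x v by move: fv; rewrite /derivable quotE.
  by split=> //; rewrite /derive quotE.
have fv' : derivable fx 0 1 by rewrite /derivable quotE.
by split=> //; rewrite /derive quotE.
Qed.

Lemma iterD_cst0 (vs : seq V) : iterD vs (cst 0 : V -> W) = cst 0.
Proof.
by elim: vs => [//|v vs IH] /=; rewrite IH; apply/funext => x; exact: derive_cst.
Qed.

Lemma iterD_eq_on_open (f g : V -> W) (U : set V) : open U ->
  {in U, f =1 g} -> forall vs, {in U, iterD vs f =1 iterD vs g}.
Proof.
move=> oU fg; elim => [|v vs IH] w /[dup] Uw /set_mem Uw' /=; first exact: fg.
apply: near_eq_derive; near=> z; apply: IH; apply/mem_set; near: z.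
exact: open_nbhs_nbhs.
Unshelve. all: by end_near. Qed.

Definition smooth_at (f : V -> W) (z : V) : Prop :=
  forall vs, {for z, continuous (iterD vs f)} /\
    forall v, derivable (iterD vs f) z v.

Lemma smooth_on_setT (f : V -> W) : (forall z, smooth_at f z) -> smooth_on setT f.
Proof.
move=> fs; split=> [|vs]; first exact: openT.
by split=> [z _|v z _]; [exact: (fs z vs).1 | exact: (fs z vs).2].
Qed.

Lemma smooth_on_setT_continuous (f : V -> W) : smooth_on setT f -> continuous f.
Proof. by case=> _ /(_ [::]) [fc _] z; exact: fc. Qed.

Lemma smooth_at_eq_on_open (f g : V -> W) (U : set V) z :
  open U -> U z -> {in U, f =1 g} -> smooth_at g z -> smooth_at f z.
Proof.
move=> oU Uz fg gz vs; have [gc gd] := gz vs.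
have gf : {near z, iterD vs g =1 iterD vs f}.
  near=> w; symmetry; apply: (iterD_eq_on_open oU fg vs); apply/mem_set.
  by near: w; exact: open_nbhs_nbhs.
split=> [|v]; last exact: near_eq_derivable gf (gd v).
have fzE : iterD vs g z = iterD vs f z := nbhs_singleton gf.
by rewrite /prop_for /continuous_at -fzE; exact: (cvg_trans (near_eq_cvg gf) gc).
Unshelve. all: by end_near. Qed.

Lemma quadratically_flat_smooth_at (f : V -> W) p :
  (forall vs, quadratically_flat (iterD vs f) p) -> smooth_at f p.
Proof.
move=> flat vs; split; first exact: quadratically_flat_continuous.
by move=> v; case: (quadratically_flat_is_derive v (flat vs)).
Qed.

End DirectionalDerivative.

(* Derivatives of terms are again terms, so the smoothness of [seval t] is
   proved by structural induction on [t]. *)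
Section SmoothTerms.
Variables (R : realType) (n : nat).
Local Notation V := 'rV[R]_n.

Inductive sterm :=
  | STcst of R
  | STcoord of 'I_n
  | STadd of sterm & sterm
  | STmul of sterm & sterm
  | STexpinv of {poly R} & sterm.

Fixpoint seval (t : sterm) (x : V) : R :=
  match t with
  | STcst c => c
  | STcoord i => x ord0 i
  | STadd a b => seval a x + seval b x
  | STmul a b => seval a x * seval b x
  | STexpinv P a => expinv P (seval a x)
  end.

Fixpoint sderiv (v : V) (t : sterm) : sterm :=
  match t with
  | STcst _ => STcst 0
  | STcoord i => STcst (v ord0 i)
  | STadd a b => STadd (sderiv v a) (sderiv v b)
  | STmul a b => STadd (STmul (sderiv v a) b) (STmul a (sderiv v b))
  | STexpinv P a => STmul (STexpinv (expinv_deriv_poly P) a) (sderiv v a)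
  end.

Definition sderivs (vs : seq V) (t : sterm) : sterm := foldr sderiv t vs.

Lemma is_derive_seval t x v : is_derive x v (seval t) (seval (sderiv v t) x).
Proof.
elim: t x => [c|i|a IHa b IHb|a IHa b IHb|P a IHa] x /=.
- exact: is_derive_cst.
- have quotE : \forall h \near 0^',
      h^-1 *: ((h *: v + x) ord0 i - x ord0 i) = v ord0 i.
    near=> h; rewrite !mxE addrK /GRing.scale /= mulrA mulVf ?mul1r //.
    near: h; exact: nbhs_dnbhs_neq.
  by split; [exact: is_cvg_near_cst quotE | exact: lim_near_cst quotE].
- exact: is_deriveD (IHa x) (IHb x).
- apply: (is_derive_eq (is_deriveM (IHa x) (IHb x))).
  by rewrite /GRing.scale /=; ring.
- apply/is_derive_line.
  have Dexpinv : is_derive (seval a (0 *: v + x)) 1 (expinv P)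
      (expinv (expinv_deriv_poly P) (seval a x)).
    by rewrite scale0r add0r; exact: is_derive_expinv.
  exact: is_derive1_comp Dexpinv ((is_derive_line _ _ _ _).2 (IHa x)).
Unshelve. all: by end_near. Qed.

Lemma continuous_seval t : continuous (seval t).
Proof.
elim: t => [c|i|a IHa b IHb|a IHa b IHb|P a IHa] x /=.
- exact: cst_continuous.
- exact: (@coord_continuous R 1 n ord0 i).
- exact: continuousD (IHa x) (IHb x).
- exact: continuousM (IHa x) (IHb x).
- by apply: continuous_comp; [exact: IHa | exact: continuous_expinv].
Qed.

Lemma iterD_seval vs t : iterD vs (seval t) = seval (sderivs vs t).
Proof.
elim: vs => [//|v vs IH] /=; rewrite IH; apply/funext => x.
by case: (is_derive_seval (sderivs vs t) x v).
Qed.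

Lemma sderivZ t c v x : seval (sderiv (c *: v) t) x = c * seval (sderiv v t) x.
Proof.
elim: t => [d|i|a IHa b IHb|a IHa b IHb|P a IHa] /=.
- by rewrite mulr0.
- by rewrite mxE.
- by rewrite IHa IHb mulrDr.
- by rewrite IHa IHb; ring.
- by rewrite IHa; ring.
Qed.

Lemma is_derive_seval_affine t (c s : R) (a z v : V) :
  is_derive z v (fun w => c * seval t (s *: (w - a)))
    (c * s * seval (sderiv v t) (s *: (z - a))).
Proof.
apply/is_derive_line.
have -> : (fun h : R => c * seval t (s *: (h *: v + z - a)))
    = (fun h => c * seval t (h *: (s *: v) + s *: (z - a))).
  apply/funext => h /=; congr (_ * seval t _).
  by rewrite -addrA scalerDr !scalerA mulrC.
have := is_derive_seval t (s *: (z - a)) (s *: v).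
move/(is_derive_line _ _ _ _).2/(is_deriveZ c).
by rewrite sderivZ /GRing.scale /= mulrA.
Qed.

Lemma iterD_seval_affine vs t (c s : R) (a : V) :
  iterD vs (fun w => c * seval t (s *: (w - a)))
  = fun w => c * s ^+ size vs * seval (sderivs vs t) (s *: (w - a)).
Proof.
elim: vs => [|v vs IH] /=; first by apply/funext => w; rewrite mulr1.
rewrite IH; apply/funext => w.
have [_ ->] := is_derive_seval_affine (sderivs vs t) (c * s ^+ size vs) s a w v.
by rewrite exprS; congr (_ * _); ring.
Qed.

Lemma smooth_at_seval_affine t (c s : R) (a z : V) :
  smooth_at (fun w => c * seval t (s *: (w - a))) z.
Proof.
move=> vs; rewrite iterD_seval_affine; split=> [|v].
  apply: continuousM; first exact: cst_continuous.
  apply: continuous_comp; last exact: continuous_seval.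
  apply: continuousZ; first exact: cst_continuous.
  by apply: continuousB; [exact: cvg_id | exact: cst_continuous].
by case: (is_derive_seval_affine (sderivs vs t) (c * s ^+ size vs) s a z v).
Qed.

Lemma rV_coord_norm_le (y : V) i : `|y ord0 i| <= `|y|.
Proof.
rewrite [leRHS]/Num.norm /= mx_normrE.
exact: (le_bigmax _ (fun ij : 'I_1 * 'I_n => `|y ij.1 ij.2|) (ord0, i)).
Qed.

Lemma seval_bounded_on_ball t : exists2 S, 0 <= S &
  forall y : V, `|y| <= 1 -> `|seval t y| <= S.
Proof.
elim: t => [c|i|a [Sa Sa0 Ha] b [Sb Sb0 Hb]|a [Sa Sa0 Ha] b [Sb Sb0 Hb]|P a _] /=.
- by exists `|c|.
- by exists 1 => // y y1; exact: le_trans (rV_coord_norm_le y i) y1.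
- exists (Sa + Sb) => [|y y1]; first exact: addr_ge0.
  by apply: (le_trans (ler_normD _ _)); exact: lerD (Ha y y1) (Hb y y1).
- exists (Sa * Sb) => [|y y1]; first exact: mulr_ge0.
  by rewrite normrM; exact: ler_pM (Ha y y1) (Hb y y1).
- have [K K0 HK] := expinv_bound P.
  by exists K => // y _; case: (HK (seval a y)).
Qed.

End SmoothTerms.

Section Bump.
Variables (R : realType) (n : nat).
Local Notation V := 'rV[R]_n.

Definition sumsq_term : sterm R n :=
  foldr (fun i acc => STadd (STmul (STcoord R i) (STcoord R i)) acc)
    (STcst n 0) (enum 'I_n).

Definition bump_arg_term : sterm R n :=
  STadd (STcst n 2^-1) (STmul (STcst n (-1)) sumsq_term).

(* Since 1/2 < 1, the bump vanishes on a neighbourhood of the set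
   [|w| >= 1] (max norm), not just on it. *)
Definition bump_term : sterm R n := STexpinv 1 bump_arg_term.

Lemma seval_sumsq (y : V) : seval sumsq_term y = \sum_(i < n) y ord0 i ^+ 2.
Proof.
rewrite /sumsq_term -big_enum /=.
by elim: (enum 'I_n) => [|i s IH] /=; rewrite ?big_nil // big_cons IH expr2.
Qed.

Lemma bump_gt0 : 0 < seval bump_term 0.
Proof.
rewrite /= seval_sumsq big1 => [|i _]; last by rewrite mxE expr0n.
by rewrite mulr0 addr0 /expinv invr_gt0 ltr0n /= hornerC mul1r expR_gt0.
Qed.

Lemma bump_derivs_eq0 vs (y : V) : 1 <= `|y| -> seval (sderivs vs bump_term) y = 0.
Proof.
move=> y1; pose neg := seval bump_arg_term @^-1` [set r | r < 0].
have oneg : open neg.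
  by apply: open_comp; [move=> z _; exact: continuous_seval | exact: open_lt].
have neg_y : neg y.
  have [[i j] /= yE] := mx_norm_neq0 (lt0r_neq0 (lt_le_trans ltr01 y1)).
  rewrite (ord1 i) in yE.
  have Hs : y ord0 j ^+ 2 <= \sum_(k < n) y ord0 k ^+ 2.
    by rewrite (bigD1 j) //= lerDl sumr_ge0 // => k _; exact: sqr_ge0.
  have : 1 <= y ord0 j ^+ 2 by rewrite -real_normK ?num_real // exprn_ege1 // -yE.
  rewrite /neg /= seval_sumsq; lra.
rewrite -iterD_seval (iterD_eq_on_open (g := cst 0) oneg) ?inE ?iterD_cst0 //.
by move=> z /set_mem negz; rewrite /= expinv_le0 // ltW.
Qed.

Lemma bump_derivs_bounded vs : exists2 S, 0 <= S &
  forall y : V, `|seval (sderivs vs bump_term) y| <= S.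
Proof.
have [S S0 HS] := seval_bounded_on_ball (sderivs vs bump_term).
exists S => // y; have [y1|y1] := leP `|y| 1; first exact: HS.
by rewrite bump_derivs_eq0 ?normr0 // ltW.
Qed.

End Bump.

Section BumpTrain.
Variables (R : realType) (n : nat).
Local Notation V := 'rV[R]_n.
Variables (p : V) (x : nat -> V) (r : nat -> R).
Hypothesis r_gt0 : forall k, 0 < r k.
Hypothesis r_small : forall k, 10 * r k <= `|x k - p|.
Hypothesis dist_shrink : forall k, 10 * `|x k.+1 - p| <= `|x k - p|.

Definition in_ball k (w : V) := `|w - x k| < r k.

Definition bump_at k (w : V) : R :=
  - expR (- (r k)^-1) * seval (bump_term R n) ((r k)^-1 *: (w - x k)).

Definition bump_train (w : V) : R := bump_at (xget 0%N [set k | in_ball k w]) w.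

Lemma dist_shrink_lt j k : (j < k)%N -> 10 * `|x k - p| <= `|x j - p|.
Proof.
elim: k => [//|k IH]; rewrite ltnS leq_eqVlt => /orP[/eqP -> //|jk].
have := IH jk; have := dist_shrink k; have := normr_ge0 (x k.+1 - p); lra.
Qed.

Lemma in_ball_far k w : in_ball k w -> r k <= `|w - p|.
Proof.
rewrite /in_ball => wk; have := r_small k; have := r_gt0 k.
have := ler_distD w (x k) p; rewrite (distrC (x k) w); lra.
Qed.

Lemma not_in_ball_p k : ~ in_ball k p.
Proof. by move/in_ball_far; rewrite subrr normr0; have := r_gt0 k; lra. Qed.

Lemma in_ball_sep (z w1 w2 : V) j k :
  `|z - w1| < `|z - p| / 10 -> `|z - w2| < `|z - p| / 10 ->
  in_ball j w1 -> in_ball k w2 -> j = k.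
Proof.
wlog jk : j k w1 w2 / (j <= k)%N.
  move=> sep zw1 zw2 jw1 kw2.
  case/orP: (leq_total j k) => jk; first exact: sep jw1 kw2.
  by apply/esym; exact: sep kw2 jw1.
rewrite leq_eqVlt in jk; case/orP: jk => [/eqP //|jk].
rewrite /in_ball => zw1 zw2 jw1 kw2; exfalso.
have := dist_shrink_lt jk; have := r_small j; have := r_small k.
have := r_gt0 j; have := r_gt0 k.
have := ler_distD w1 (x j) p; have := ler_distD z w1 p; have := ler_distD w1 z p.
have := ler_distD (x k) w2 p; have := ler_distD w2 z p.
rewrite (distrC (x j) w1) (distrC w1 z); lra.
Qed.

Lemma in_ball_unique j k w : in_ball j w -> in_ball k w -> j = k.
Proof.
move=> jw; apply: (in_ball_sep (z := w) _ _ jw); rewrite subrr normr0 divr_gt0 //;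
  exact: lt_le_trans (r_gt0 j) (in_ball_far jw).
Qed.

Lemma bump_at_out k w : ~ in_ball k w -> bump_at k w = 0.
Proof.
move=> kw; rewrite /bump_at (bump_derivs_eq0 [::]) ?mulr0 //.
rewrite normrZ gtr0_norm ?invr_gt0 // ler_pdivlMl // mulr1.
by rewrite leNgt; apply/negP.
Qed.

Lemma bump_train_eq w k :
  (forall j, in_ball j w -> j = k) -> bump_train w = bump_at k w.
Proof.
move=> wk; rewrite /bump_train.
have [kw|kw] := pselect (in_ball k w).
  by rewrite (wk _ (@xgetPex _ 0%N [set k | in_ball k w] (ex_intro _ k kw))).
rewrite !bump_at_out // => jw; apply: kw.
by rewrite -(wk _ jw).
Qed.

Lemma bump_train_lt0 k : bump_train (x k) < 0.
Proof.
have kxk : in_ball k (x k) by rewrite /in_ball subrr normr0.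
rewrite (@bump_train_eq _ k) => [|j jxk]; last exact: in_ball_unique jxk kxk.
rewrite /bump_at subrr scaler0 mulNr oppr_lt0 mulr_gt0 ?expR_gt0 //.
exact: bump_gt0.
Qed.

Lemma bump_train_local z : z != p ->
  exists k, exists2 U : set V, open U /\ U z & {in U, bump_train =1 bump_at k}.
Proof.
move=> zp; have rho0 : 0 < `|z - p| / 10 by rewrite divr_gt0 // normr_gt0 subr_eq0.
pose U := ball z (`|z - p| / 10).
have Uz w : U w -> `|z - w| < `|z - p| / 10 by rewrite /U -ball_normE.
have [[k [w0 [Uw0 kw0]]]|noball] := pselect (exists k w, U w /\ in_ball k w).
  exists k, U; first by split; [exact: ball_open | exact: ballxx].
  move=> w /set_mem Uw; apply: bump_train_eq => j jw.
  exact: in_ball_sep (Uz _ Uw) (Uz _ Uw0) jw kw0.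
exists 0%N, U; first by split; [exact: ball_open | exact: ballxx].
move=> w /set_mem Uw; rewrite /bump_train !bump_at_out // => jw; apply: noball.
  by exists 0%N, w.
by exists (xget 0%N [set k | in_ball k w]), w.
Qed.

Lemma iterD_bump_train_bound vs : exists2 K, 0 <= K &
  forall z, z != p -> `|iterD vs bump_train z| <= K * `|z - p| ^+ 2.
Proof.
have [S S0 HS] := bump_derivs_bounded vs.
have [Kq Kq0 HKq] := expinv_quadratically_flat ('X^(size vs) : {poly R}).
exists (Kq * S) => [|z zp]; first exact: mulr_ge0.
have [k [U [oU Uz] trainE]] := bump_train_local zp.
rewrite (iterD_eq_on_open oU trainE) ?inE // /bump_at iterD_seval_affine.
have [kz|kz] := pselect (in_ball k z); last first.
  rewrite bump_derivs_eq0 ?mulr0 ?normr0 ?mulr_ge0 ?exprn_ge0 //.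
  rewrite normrZ gtr0_norm ?invr_gt0 // ler_pdivlMl // mulr1.
  by rewrite leNgt; apply/negP.
have -> : - expR (- (r k)^-1) * (r k)^-1 ^+ size vs = - expinv 'X^(size vs) (r k).
  by rewrite /expinv r_gt0 hornerXn mulNr mulrC.
rewrite normrM normrN.
apply: (@le_trans _ _ (Kq * r k ^+ 2 * S)).
  apply: ler_pM; rewrite ?normr_ge0 ?HS //.
  by have := HKq (r k); rewrite subr0 (gtr0_norm (r_gt0 k)).
rewrite mulrAC ler_wpM2l ?mulr_ge0 // ler_pXn2r ?nnegrE ?normr_ge0 ?in_ball_far //.
exact: ltW (r_gt0 k).
Qed.

Lemma iterD_bump_train_flat vs : quadratically_flat (iterD vs bump_train) p.
Proof.
have flat_of_eq0 us : iterD us bump_train p = 0 ->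
    quadratically_flat (iterD us bump_train) p.
  move=> trainp; have [K K0 HK] := iterD_bump_train_bound us.
  exists K => // z; have [->|zp] := eqVneq z p; last exact: HK.
  by rewrite trainp normr0 mulr_ge0 // exprn_ge0.
elim: vs => [|v vs IH]; apply: flat_of_eq0 => /=.
  by rewrite /bump_train bump_at_out //; exact: not_in_ball_p.
by case: (quadratically_flat_is_derive v IH).
Qed.

Lemma smooth_bump_train : smooth_on setT bump_train.
Proof.
apply: smooth_on_setT => z; have [->|zp] := eqVneq z p.
  exact/quadratically_flat_smooth_at/iterD_bump_train_flat.
have [k [U [oU Uz] trainE]] := bump_train_local zp.
exact: smooth_at_eq_on_open oU Uz trainE (smooth_at_seval_affine _ _ _ _ _).
Qed.

End BumpTrain.

Lemma shrinking_lt (R : realType) (d : nat -> R) :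
  d 0%N <= 1 -> (forall k, 10 * d k.+1 <= d k) ->
  forall e, 0 < e -> exists k, d k < e.
Proof.
move=> d0 shrink e e0.
have d_le k : d k <= k.+1%:R^-1.
  elim: k => [|k IH]; first by rewrite invr1.
  have k1 : 0 < k.+1%:R :> R by rewrite ltr0n.
  apply: (le_trans _ (_ : k.+1%:R^-1 / 10 <= _)).
    by rewrite ler_pdivlMr // mulrC; exact: le_trans (shrink k) IH.
  by rewrite -invfM lef_pV2 ?posrE ?mulr_gt0 // -natrM ler_nat mulnC; lia.
exists (Num.truncn e^-1); apply: (le_lt_trans (d_le _)).
by rewrite -[ltRHS]invrK ltf_pV2 ?posrE ?invr_gt0 ?ltr0n // truncnS_gt.
Qed.

Section EscapingPoints.
Variables (R : realType) (n : nat).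
Local Notation V := 'rV[R]_n.
Variables (p : V) (X C : set V).
Hypotheses (closedC : closed C) (Cp : C p).
Hypothesis escape : forall e : R, 0 < e -> exists x, [/\ X x, ~ C x & `|x - p| < e].

Lemma escaping_sequence : exists (x : nat -> V) (r : nat -> R),
  (forall k, [/\ X (x k), 0 < r k, 10 * r k <= `|x k - p|,
     10 * `|x k.+1 - p| <= `|x k - p| & forall w, `|w - x k| < r k -> ~ C w]) /\
  (forall e, 0 < e -> exists k, `|x k - p| < e).
Proof.
have pick_ex e : exists x, 0 < e -> [/\ X x, ~ C x & `|x - p| < e].
  have [e0|e0] := ltP 0 e; last by exists p.
  by have [x xP] := escape e0; exists x.
have [pick pickP] := choice pick_ex.
have rho_ex w : exists r : R, ~ C w -> 0 < r /\ forall u, `|u - w| < r -> ~ C u.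
  have [Cw|nCw] := pselect (C w); first by exists 0.
  have : nbhs w (~` C) by apply: open_nbhs_nbhs; split => //; exact: closed_openC.
  move/nbhs_ballP => [r r0 rC]; exists r => _; split => // u uw; apply: rC.
  by rewrite -ball_normE /= distrC.
have [rho rhoP] := choice rho_ex.
pose x k := iter k (fun w => pick (`|w - p| / 10)) (pick 1).
have x_gt0 w : ~ C w -> 0 < `|w - p|.
  by move=> nCw; rewrite normr_gt0 subr_eq0; apply: contra_notN nCw => /eqP ->.
have xP k : [/\ X (x k), ~ C (x k) & 0 < `|x k - p|].
  elim: k => [|k [_ nCk _]].
    by have [? ? _] := pickP 1 ltr01; split => //; exact: x_gt0.
  have [? ? _] := pickP (`|x k - p| / 10) (divr_gt0 (x_gt0 _ nCk) (ltr0n _ 10)).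
  by rewrite /x iterS -/(x k); split => //; exact: x_gt0.
have shrink k : 10 * `|x k.+1 - p| <= `|x k - p|.
  have [_ _ xk0] := xP k.
  have [_ _] := pickP (`|x k - p| / 10) (divr_gt0 xk0 (ltr0n _ 10)).
  by rewrite /x iterS -/(x k) ltr_pdivlMr // mulrC => /ltW.
exists x, (fun k => Num.min (`|x k - p| / 10) (rho (x k))); split=> [k|].
  have [Xk nCk xk0] := xP k; have [rho0 rhoC] := rhoP _ nCk.
  split=> //; first by rewrite lt_min divr_gt0.
    by rewrite mulrC -ler_pdivlMr // ge_min lexx.
  by move=> w; rewrite lt_min => /andP[_]; exact: rhoC.
apply: (shrinking_lt (d := fun k => `|x k - p|) _ shrink).
by have [_ _ /ltW] := pickP 1 ltr01.
Qed.

Lemma smooth_cost_escaping : exists f : V -> R,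
  [/\ smooth_on setT f, forall w, C w -> f w = 0 &
      forall e, 0 < e -> exists x, [/\ X x, `|x - p| < e & f x < 0]].
Proof.
have [x [r [xrP xlim]]] := escaping_sequence.
have r_gt0 k : 0 < r k by case: (xrP k).
have r_small k : 10 * r k <= `|x k - p| by case: (xrP k).
have shrink k : 10 * `|x k.+1 - p| <= `|x k - p| by case: (xrP k).
exists (bump_train x r); split.
- exact: smooth_bump_train r_gt0 r_small shrink.
- move=> w Cw; rewrite /bump_train bump_at_out // => kw.
  by have [_ _ _ _ /(_ w kw)] := xrP (xget 0%N [set k | in_ball x r k w]).
- move=> e e0; have [k xke] := xlim e e0; have [Xk _ _ _ _] := xrP k.
  by exists (x k); split => //; exact: bump_train_lt0 r_gt0 r_small shrink k.
Qed.

End EscapingPoints.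

Lemma compact_closed_ball_rV (R : realType) (n : nat) (a : 'rV[R]_n) (e : R) :
  compact (closed_ball_ Num.norm a e).
Proof.
apply: bounded_closed_compact; last exact: closed_closed_ball_.
exists (`|a| + e); split; first exact: num_real.
move=> b b_gt w aw /=; apply: (le_trans _ (ltW b_gt)).
have := ler_distD a w 0; rewrite !subr0 distrC.
by move: aw; rewrite /closed_ball_ /=; lra.
Qed.

Section SmoothLift.
Variables (R : realType) (d n : nat) (M : topologicalType).
Variables (At : set (chart R d M)) (phi : M -> 'rV[R]_n) (y : M).
Hypotheses (HM : smooth_manifold At) (Hphi : smooth_map At phi).

(* The image under [phi] of a closed ball in a chart around [y] is compact,
   hence closed in [R^n]. *)
Lemma closed_image_between (N : set M) : nbhs y N ->
  exists K (C : set 'rV[R]_n), [/\ nbhs y K, closed C, C (phi y),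
    phi @` K `<=` C & C `<=` phi @` N].
Proof.
move=> Ny; have [_ _ [charts cover _]] := HM.
have [c Atc yc] := cover y.
have [odom oimg linv cm ci] := charts c Atc.
set m := ch_map c in oimg linv cm ci *.
set io := ch_inv c in linv ci *.
set D := ch_dom c in odom linv cm ci yc *.
have Omy : (m @` D) (m y) by exists y.
have iomy : io (m y) = y := linv y yc.
have [_ phi_smooth] := Hphi Atc; have [phi_cont _] := phi_smooth [::].
rewrite continuous_open_subspace // in cm.
rewrite continuous_open_subspace // in ci.
have : nbhs (m y) (io @^-1` N `&` m @` D).
  apply: filterI; last exact: open_nbhs_nbhs.
  by apply: ci; [exact: mem_set | rewrite iomy].
move/nbhs_ballP => [del del0 del_sub].
set B := closed_ball_ Num.norm (m y) (del / 2).
have B_ball w : B w -> ball (m y) del w.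
  rewrite /B /closed_ball_ -ball_normE /= => yw.
  by apply: (le_lt_trans yw); rewrite ltr_pdivrMr // ltr_pMr // ltr1n.
exists (D `&` m @^-1` ball (m y) (del / 2)), ((phi \o io) @` B); split.
- apply: filterI; first exact: open_nbhs_nbhs.
  by apply: cm; [exact: mem_set | apply: nbhsx_ballx; exact: divr_gt0].
- apply: compact_closed; first exact: norm_hausdorff.
  apply: continuous_compact.
    apply: continuous_in_subspaceT => w /set_mem Bw.
    by have [_ Ow] := del_sub w (B_ball w Bw); exact: phi_cont.
  exact: compact_closed_ball_rV.
- exists (m y); last by rewrite /= iomy.
  by rewrite /B /closed_ball_ /= subrr normr0 divr_ge0 // ltW.
- move=> _ [u [Du Bu] <-]; exists (m u); last by rewrite /= linv.
  by move: Bu; rewrite /B /closed_ball_ -ball_normE /= => /ltW.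
- by move=> _ [v Bv <-]; have [Nv _] := del_sub v (B_ball v Bv); exists (io v).
Qed.

Lemma not_open_at_counterexample : ~ open_at phi y ->
  exists f : 'rV[R]_n -> R, [/\ smooth_on setT f, local_min (f \o phi) y &
    ~ local_min_in (range phi) f (phi y)].
Proof.
move=> /existsNP [N /not_implyP [Ny not_nbhs]].
have [K [C [Ky closedC Cy KC CN]]] := closed_image_between Ny.
have escape e : 0 < e -> exists x, [/\ range phi x, ~ C x & `|x - phi y| < e].
  move=> e0; apply: contrapT => no_escape; apply: not_nbhs.
  split; first by exists y.
  exists (ball (phi y) e); first exact: nbhsx_ballx.
  move=> x [yx Xx]; apply: contrapT => notNx; apply: no_escape; exists x.
  by split=> //; [move/CN | move: yx; rewrite -ball_normE /= distrC].
have [f [f_smooth f0 f_neg]] := smooth_cost_escaping closedC Cy escape.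
exists f; split=> //.
  by exists K => // u Ku /=; rewrite !f0 //; apply: KC; exists u.
move=> [_ [S [_ [U Uy US]] fS]].
have [e e0 eU] := (nbhs_ballP _ _).1 Uy.
have [x [Xx yx fx]] := f_neg e e0.
have Sx : S x by apply: US; split=> //; apply: eU; rewrite -ball_normE /= distrC.
by have := fS x Sx Xx; rewrite f0 // leNgt fx.
Qed.

End SmoothLift.

Lemma open_at_local_local (R : realType) (M E : topologicalType) (phi : M -> E) y :
  open_at phi y -> local_local R phi y.
Proof.
move=> phi_open f _ [U Uy fU]; split; first by exists y.
exists (phi @` U); first exact: phi_open.
by move=> _ [u Uu <-] _; exact: fU.
Qed.

Unset Implicit Arguments.
Theorem theorem2p3 (R : realType) (d n : nat) (M : topologicalType)
    (At : set (chart R d M)) (HM : smooth_manifold At)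
    (phi : M -> 'rV[R]_n) (Hphi : smooth_map At phi) (y : M) :
  (local_local R phi y <-> open_at phi y) /\
  (~ local_local R phi y ->
     exists f : 'rV[R]_n -> R,
       smooth_on setT f /\
       local_min (f \o phi) y /\
       ~ local_min_in (range phi) f (phi y)).
Proof.
have counterexample := not_open_at_counterexample (y := y) HM Hphi.
have open_of_local_local : local_local R phi y -> open_at phi y.
  move=> phi_ll; apply: contrapT => /counterexample [f [f_smooth fy_min]].
  apply; apply: (phi_ll f _ fy_min); apply: continuous_subspaceT.
  exact: smooth_on_setT_continuous.
split; first by split; [exact: open_of_local_local | exact: open_at_local_local].
move=> not_ll; have [|f [f_smooth fy_min not_min]] := counterexample.
  by move/open_at_local_local.
by exists f.
Qed.
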